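(* Let $\bm{A}=[\bm{A}_1\ \bm{A}_2]\in\mathbb{R}^{m\times(n_1+n_2)}$ have full column rank with $\bm{A}_j^\top\bm{A}_j=\bm{I}_j$, $\bm{C}:=\bm{A}_2^\top\bm{A}_1\ne0$, and suppose $r:=\operatorname{rank}(\bm{C})=\min\{n_1,n_2\}$. With $S_{11}:=[1,\infty)\times[1,\infty)$, $\min_{(\gamma_1,\gamma_2)\in S_{11}}\rho(\bm{M}(\gamma_1,\gamma_2))=\dfrac{\sqrt{1-\lambda_r(\bm{C}\bm{C}^\top)}-\sqrt{1-\lambda_1(\bm{C}\bm{C}^\top)}}{\sqrt{1-\lambda_r(\bm{C}\bm{C}^\top)}+\sqrt{1-\lambda_1(\bm{C}\bm{C}^\top)}}.$
   Context: $\rho$: spectral radius; $\lambda_i$: $i$-th largest eigenvalue. $\bm{M}(\gamma_1,\gamma_2)=\begin{bmatrix}(1-\gamma_1)\bm{I}_1&-\gamma_1\bm{C}^\top\\-\gamma_2(1-\gamma_1)\bm{C}&(1-\gamma_2)\bm{I}_2+\gamma_1\gamma_2\bm{C}\bm{C}^\top\end{bmatrix}$, the two-block gradient descent iteration matrix with stepsizes $\gamma_1,\gamma_2$. *)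

From mathcomp Require Import all_boot all_order all_algebra.
From mathcomp Require Import reals.
From mathcomp.real_closed Require Import complex.
Set Implicit Arguments. Unset Strict Implicit. Unset Printing Implicit Defensive.
Import Order.TTheory GRing.Theory Num.Theory.
Local Open Scope ring_scope.

Section Defs.
Variable R : realType.

Definition cmx n (M : 'M[R]_n) : 'M[R[i]]_n := map_mx (fun x : R => Complex x 0) M.

(* the complex eigenvalues of M, listed with algebraic multiplicity
   (the roots of its characteristic polynomial in R[i]) *)
Definition ceigs n (M : 'M[R]_n) : seq R[i] :=
  projT1 (closed_field_poly_normal (char_poly (cmx M))).

Definition cmod (z : R[i]) : R := Num.sqrt (complex.Re z ^+ 2 + complex.Im z ^+ 2).

Definition spectral_radius n (M : 'M[R]_n) : R :=
  \big[Num.max/0]_(z <- ceigs M) cmod z.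

(* lambda_i(M) (1-indexed): i-th largest eigenvalue of M, for M with real
   spectrum (e.g. symmetric), counted with multiplicity. *)
Definition eig_desc n (i : nat) (M : 'M[R]_n) : R :=
  nth 0 (sort (fun x y : R => y <= x) [seq complex.Re z | z <- ceigs M]) i.-1.

Definition gd_iter_mx n1 n2 (C : 'M[R]_(n2, n1)) (g1 g2 : R) : 'M[R]_(n1 + n2) :=
  block_mx ((1 - g1)%:M) (- g1 *: C^T)
           (- (g2 * (1 - g1)) *: C) ((1 - g2)%:M + (g1 * g2) *: (C *m C^T)).

End Defs.
Arguments gd_iter_mx {R n1 n2} C g1 g2.
Arguments spectral_radius {R n} M.
Arguments eig_desc {R n} i M.

From mathcomp Require Import all_boot all_order all_algebra.
From mathcomp Require Import reals.
From mathcomp.real_closed Require Import complex.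
From mathcomp Require Import ring lra zify.
Set Implicit Arguments. Unset Strict Implicit. Unset Printing Implicit Defensive.
Import Order.TTheory GRing.Theory Num.Theory.
Local Open Scope ring_scope.

(* Every eigenvalue z of M(g1, g2) either comes from an eigenvalue mu of C C^T through
   (z + g1 - 1) (z + g2 - 1) = g1 g2 mu z, or is 0, or is 1 - g1 (possible only if n1 > n2)
   or 1 - g2 (possible only if n2 > n1).  As I - C C^T is again a Gram matrix
   and rank C = r, the nonzero mu lie in [lambda_r, lambda_1], a subset of (0, 1).
   Lower bound: the roots of the two quadratics for mu = lambda_r and mu = lambda_1 are
   eigenvalues, and confining them to the disc of radius rho forces rho >= v.
   Upper bound: take p = g1 - 1, q = g2 - 1 with p q = v^2 and
   (1 + p) (1 + q) = 4 / (sqrt (1 - lambda_r) + sqrt (1 - lambda_1))^2.  Then every quadratic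
   has a nonpositive discriminant, so all its roots have modulus sqrt (p q) = v, and the
   smaller of p, q (which is at most v) goes to the block whose extra eigenvalue can occur. *)

Section Spectrum.
Variable R : realType.
Local Notation toC := (real_complex R).

Lemma cmxE n (M : 'M[R]_n) : cmx M = map_mx toC M.
Proof. by apply/matrixP => i j; rewrite !mxE. Qed.

Lemma char_poly_cmx n (M : 'M[R]_n) :
  char_poly (cmx M) = \prod_(z <- ceigs M) ('X - z%:P).
Proof.
rewrite /ceigs; case: (closed_field_poly_normal _) => s /= ->.
by rewrite (monicP (char_poly_monic _)) scale1r.
Qed.

Lemma mem_ceigs n (M : 'M[R]_n) z : (z \in ceigs M) = eigenvalue (cmx M) z.
Proof. by rewrite eigenvalue_root_char char_poly_cmx root_prod_XsubC. Qed.

Lemma size_ceigs n (M : 'M[R]_n) : size (ceigs M) = n.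
Proof. by have := size_char_poly (cmx M); rewrite char_poly_cmx size_prod_XsubC => -[]. Qed.

Lemma count_mem_ceigs n (M : 'M[R]_n) z :
  count_mem z (ceigs M) = mup z (char_poly (cmx M)).
Proof. by rewrite char_poly_cmx mu_prod_XsubC. Qed.

Lemma cmod_real (x : R) : cmod x%:C%C = `|x|.
Proof. by rewrite /cmod /= expr0n /= addr0 sqrtr_sqr. Qed.

Lemma cmod0 : cmod (0 : R[i]) = 0.
Proof. by rewrite /cmod /= expr0n /= addr0 sqrtr0. Qed.

Lemma spectral_radius_ge0 n (M : 'M[R]_n) : 0 <= spectral_radius M.
Proof.
rewrite /spectral_radius; elim: (ceigs M) => [|z s IHs]; rewrite ?big_nil ?big_cons //.
by rewrite le_max IHs orbT.
Qed.

Lemma cmod_le_spectral_radius n (M : 'M[R]_n) z :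
  z \in ceigs M -> cmod z <= spectral_radius M.
Proof. by move=> zM; apply: le_bigmax_seq. Qed.

Lemma spectral_radius_le n (M : 'M[R]_n) x : 0 <= x ->
  (forall z, z \in ceigs M -> cmod z <= x) -> spectral_radius M <= x.
Proof.
move=> x_ge0 Mx; rewrite /spectral_radius big_seq_cond; apply: bigmax_le => // z.
by rewrite andbT; apply: Mx.
Qed.

End Spectrum.

Section GramEigen.
Variable C : numClosedFieldType.
Local Open Scope sesquilinear_scope.

Lemma dotmx_gram_eigen n k (A : 'M[C]_(n, k)) (w : 'rV_n) mu :
  w *m (A *m A ^t*) = mu *: w -> mu * dotmx w w = dotmx (w *m A) (w *m A).
Proof.
move=> Aw; rewrite !dotmxE.
have -> : (w *m A) ^t* = A ^t* *m w ^t* by rewrite trmx_mul map_mxM.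
by rewrite mulmxA -(mulmxA w) Aw -scalemxAl [RHS]mxE.
Qed.

Lemma gram_eigen_ge0 n k (A : 'M[C]_(n, k)) (w : 'rV_n) mu :
  w != 0 -> w *m (A *m A ^t*) = mu *: w -> 0 <= mu.
Proof.
move=> w_neq0 /dotmx_gram_eigen Ew.
by rewrite -(pmulr_lge0 _ (dotmx_is_dotmx w_neq0)) Ew dnorm_ge0.
Qed.

Lemma gram_eigen0 n k (A : 'M[C]_(n, k)) (w : 'rV_n) :
  w *m (A *m A ^t*) = 0 -> w *m A = 0.
Proof.
move=> Aw; apply/eqP; apply: contraT => wA_neq0.
have := dotmx_gram_eigen (etrans Aw (esym (scale0r w))).
by rewrite mul0r => /esym/eqP; rewrite gt_eqF ?dotmx_is_dotmx.
Qed.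

Lemma gram_root0_char_poly n k (A : 'M[C]_(n, k)) :
  row_free A -> ~~ root (char_poly (A *m A ^t*)) 0.
Proof.
move=> A_free; rewrite -eigenvalue_root_char; apply/eigenvalueP => -[w Aw].
have /gram_eigen0 wA0 : w *m (A *m A ^t*) = 0 by rewrite Aw scale0r.
by rewrite -(row_free_inj A_free (etrans wA0 (esym (mul0mx _ A)))) eqxx.
Qed.

End GramEigen.

Section DetBlockScalar.
Variable R : comNzRingType.

Lemma det_block_mx_scalar_ul n1 n2 (a : R) (B : 'M_(n1, n2)) (C : 'M_(n2, n1)) D :
  a ^+ n2 * \det (block_mx a%:M B C D) = a ^+ n1 * \det (a *: D - C *m B).
Proof.
have E : block_mx 1%:M 0 (- C) a%:M *m block_mx a%:M B C D =
         block_mx a%:M B 0 (a *: D - C *m B).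
  rewrite mulmx_block !mul1mx !mul0mx !addr0 mul_mx_scalar mul_scalar_mx.
  by rewrite scalerN addNr mul_scalar_mx addrC mulNmx.
have := congr1 determinant E.
by rewrite det_mulmx det_lblock det_ublock det1 mul1r !det_scalar => ->.
Qed.

Lemma det_block_mx_scalar_dr n1 n2 (b : R) A (B : 'M_(n1, n2)) (C : 'M_(n2, n1)) :
  b ^+ n1 * \det (block_mx A B C b%:M) = b ^+ n2 * \det (b *: A - B *m C).
Proof.
have E : block_mx b%:M (- B) 0 1%:M *m block_mx A B C b%:M =
         block_mx (b *: A - B *m C) 0 C b%:M.
  rewrite mulmx_block !mul1mx !mul0mx !add0r !mul_scalar_mx !mulNmx.
  by rewrite mul_mx_scalar subrr.
have := congr1 determinant E.
by rewrite det_mulmx det_lblock det_ublock det1 mulr1 !det_scalar => ->; rewrite mulrC.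
Qed.

End DetBlockScalar.

Lemma char_poly_mulmxC (R : comNzRingType) n1 n2 (B : 'M[R]_(n1, n2)) (C : 'M[R]_(n2, n1)) :
  'X ^+ n2 * char_poly (B *m C) = 'X ^+ n1 * char_poly (C *m B).
Proof.
rewrite /char_poly /char_poly_mx !map_mxM.
have := det_block_mx_scalar_ul 'X (map_mx polyC B) (map_mx polyC C) 1%:M.
rewrite scalemx1 => <-; congr (_ * _).
have := det_block_mx_scalar_dr 1 ('X%:M : 'M[{poly R}]_n1) (map_mx polyC B) (map_mx polyC C).
by rewrite !expr1n !mul1r scale1r.
Qed.

Lemma mup0_char_poly_mulmxC (F : fieldType) n1 n2 (B : 'M[F]_(n1, n2)) (C : 'M_(n2, n1)) :
  (n2 + mup 0 (char_poly (B *m C)) = n1 + mup 0 (char_poly (C *m B)))%N.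
Proof.
have mupX n : mup 0 ('X ^+ n : {poly F}) = n by rewrite -[X in X ^+ n]subr0 mup_XsubCX eqxx.
have Xn_neq0 n : ('X ^+ n : {poly F}) != 0 by rewrite expf_neq0 ?polyX_eq0.
have := congr1 (mup 0) (char_poly_mulmxC B C).
by rewrite !mupM ?Xn_neq0 ?monic_neq0 ?char_poly_monic // !mupX.
Qed.

Section GradientIteration.
Variable F : fieldType.
Variables (n1 n2 : nat) (C : 'M[F]_(n2, n1)) (g1 g2 : F).

Definition gd_mx : 'M[F]_(n1 + n2) :=
  block_mx ((1 - g1)%:M) (- g1 *: C^T)
           (- (g2 * (1 - g1)) *: C) ((1 - g2)%:M + (g1 * g2) *: (C *m C^T)).

Lemma gd_mx_eigenE z (x : 'rV_n1) (y : 'rV_n2) :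
  row_mx x y *m gd_mx = z *: row_mx x y <->
  (z + g1 - 1) *: x = (g2 * (g1 - 1)) *: (y *m C) /\
  (z + g2 - 1) *: y = - g1 *: (x *m C^T) + (g1 * g2) *: (y *m (C *m C^T)).
Proof.
rewrite /gd_mx mul_row_block scale_row_mx !mul_mx_scalar -!scalemxAr mulmxDr.
rewrite mul_mx_scalar -scalemxAr.
split => [/eq_row_mx [h1 h2] | [h1 h2]].
  split; apply/rowP => j.
    move/rowP: h1 => /(_ j); rewrite !mxE => h.
    have -> : (z + g1 - 1) * x 0 j = z * x 0 j - (1 - g1) * x 0 j by ring.
    by rewrite -h; ring.
  move/rowP: h2 => /(_ j); rewrite !mxE => h.
  have -> : (z + g2 - 1) * y 0 j = z * y 0 j - (1 - g2) * y 0 j by ring.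
  by rewrite -h; ring.
congr row_mx; apply/rowP => j.
  move/rowP: h1 => /(_ j); rewrite !mxE => h.
  have -> : z * x 0 j = (z + g1 - 1) * x 0 j + (1 - g1) * x 0 j by ring.
  by rewrite h; ring.
move/rowP: h2 => /(_ j); rewrite !mxE => h.
have -> : z * y 0 j = (z + g2 - 1) * y 0 j + (1 - g2) * y 0 j by ring.
by rewrite h; ring.
Qed.

Lemma gd_mx_eigen_gram z (x : 'rV_n1) (y : 'rV_n2) :
  row_mx x y *m gd_mx = z *: row_mx x y ->
  ((z + g1 - 1) * (z + g2 - 1)) *: y = (g1 * g2 * z) *: (y *m (C *m C^T)).
Proof.
move=> /gd_mx_eigenE [Ex Ey].
have ExC : (z + g1 - 1) *: (x *m C^T) = (g2 * (g1 - 1)) *: (y *m (C *m C^T)).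
  by rewrite scalemxAl Ex -scalemxAl mulmxA.
rewrite -[LHS]scalerA Ey scalerDr !scalerA (mulrC _ (- g1)).
rewrite -[(- g1 * _) *: _]scalerA ExC scalerA -scalerDl.
by congr (_ *: _); ring.
Qed.

Lemma gd_mx_eigenvalue z s (y : 'rV_n2) :
  y != 0 -> y *m (C *m C^T) = s *: y -> z + g1 - 1 != 0 ->
  (z + g1 - 1) * (z + g2 - 1) = g1 * g2 * z * s -> eigenvalue gd_mx z.
Proof.
move=> y_neq0 Cy z1_neq0 zs.
pose x := (g2 * (g1 - 1) / (z + g1 - 1)) *: (y *m C).
apply/eigenvalueP; exists (row_mx x y); last first.
  by apply: contra y_neq0; rewrite -row_mx0 => /eqP /eq_row_mx [_ ->].
apply/gd_mx_eigenE; split; first by rewrite scalerA mulrCA divff // mulr1.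
rewrite -scalemxAl -mulmxA Cy !scalerA -scalerDl; congr (_ *: _).
by apply: (mulfI z1_neq0); rewrite zs; field.
Qed.

End GradientIteration.

Section SortedDecreasing.
Variable R : realFieldType.
Implicit Types (s : seq R).
Local Notation ge := (fun x y : R => y <= x).

Lemma sorted_ge_nth s i j : sorted ge s -> (i <= j < size s)%N -> nth 0 s j <= nth 0 s i.
Proof.
move=> s_sorted /andP[ij js].
have ge_trans : transitive ge by move=> y x z xy yz; exact: le_trans yz xy.
apply: (sorted_leq_nth ge_trans (@lexx _ _) 0 s_sorted); rewrite ?inE //.
exact: leq_ltn_trans ij js.
Qed.

Lemma count_ge_nth s k : sorted ge s -> (k < size s)%N ->
  (k < count (fun x : R => (nth 0 s k <= x)%R) s)%N.
Proof.
move=> s_sorted ks; set P := fun x : R => (nth 0 s k <= x)%R.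
rewrite -[X in count _ X](cat_take_drop k.+1) count_cat.
suff -> : count P (take k.+1 s) = k.+1 by rewrite leq_addr.
apply/eqP; rewrite -[X in _ == X](size_takel ks) -all_count; apply/(all_nthP 0) => i.
rewrite size_takel // => ik; rewrite /P nth_take //.
by apply: sorted_ge_nth; rewrite // -ltnS ik.
Qed.

Lemma count_le_nth s k : sorted ge s -> (k < size s)%N ->
  (size s - k <= count (fun x : R => (x <= nth 0 s k)%R) s)%N.
Proof.
move=> s_sorted ks; set P := fun x : R => (x <= nth 0 s k)%R.
rewrite -[X in count _ X](cat_take_drop k) count_cat.
suff -> : count P (drop k s) = (size s - k)%N by rewrite leq_addl.
apply/eqP; rewrite -[X in _ == X]size_drop -all_count; apply/(all_nthP 0) => i.
rewrite size_drop => ik.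
rewrite /P nth_drop; apply: sorted_ge_nth => //.
by rewrite leq_addr /= -ltn_subRL.
Qed.

Lemma sorted_ge_nth_rank s r : sorted ge s -> all (fun x => 0 <= x) s ->
  (0 < r <= size s)%N -> count (pred1 0) s = (size s - r)%N ->
  0 < nth 0 s r.-1 /\ {in s, forall x, x != 0 -> nth 0 s r.-1 <= x}.
Proof.
move=> s_sorted /allP s_ge0 /andP[r_gt0 rs] s0.
have r1s : (r.-1 < size s)%N by rewrite (leq_trans _ rs) // ltn_predL.
split.
  rewrite ltNge; apply/negP => a_le0.
  have : (count (fun x => (x <= nth 0 s r.-1)%R) s <= count (pred1 0%R) s)%N.
    rewrite (@eq_in_count _ (pred1 0) (fun x => x <= 0)) => [|x /s_ge0 x_ge0 /=].
      by apply: sub_count => x /= xa; apply: le_trans xa a_le0.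
    by rewrite eq_le x_ge0 andbT.
  by move/(leq_trans (count_le_nth s_sorted r1s)); rewrite s0; lia.
move=> x xs x_neq0; have x_gt0 : 0 < x by rewrite lt_def x_neq0 s_ge0.
have js : (index x s < size s)%N by rewrite index_mem.
rewrite -(nth_index 0 xs); have [jr|rj] := leqP (index x s) r.-1.
  by apply: sorted_ge_nth; rewrite // jr.
have : (index x s < count (predC (pred1 0%R)) s)%N.
  apply: leq_trans (count_ge_nth s_sorted js) _; rewrite nth_index //.
  by apply: sub_count => y /= xy; rewrite lt0r_neq0 // (lt_le_trans x_gt0 xy).
rewrite (prednK r_gt0) in rj.
have cnt : count (predC (pred1 0%R)) s = r.
  by apply/eqP; rewrite -(eqn_add2l (size s - r)) -{1}s0 count_predC subnK.
by rewrite cnt; lia.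
Qed.

End SortedDecreasing.

Section ComplexQuadratic.
Variable R : realType.
Local Open Scope complex_scope.
Implicit Types (B P : R) (z : R[i]).

Lemma quad_rootE (x y B P : R) :
  (x +i* y) ^+ 2 + B%:C * (x +i* y) + P%:C = 0 <->
  (x ^+ 2 - y ^+ 2 + B * x + P = 0 /\ 2 * x * y + B * y = 0)%R.
Proof.
rewrite expr2 /=; simpc; split.
  by case=> e1 e2; split; [rewrite -[RHS]e1 | rewrite -[RHS]e2]; ring.
case=> e1 e2; apply/eqP; rewrite eq_complex /=; apply/andP; split; apply/eqP.
  by rewrite -[RHS]e1; ring.
by rewrite -[RHS]e2; ring.
Qed.

Lemma quad_root_real (x B P : R) :
  (x ^+ 2 + B * x + P = 0)%R -> x%:C ^+ 2 + B%:C * x%:C + P%:C = 0.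
Proof.
by move=> e; rewrite -complexr0; apply/quad_rootE; split; [rewrite -[RHS]e|]; ring.
Qed.

(* With a nonpositive discriminant the two roots are conjugate, so both have modulus sqrt P. *)
Lemma cmod_quad_root z B P : z ^+ 2 + B%:C * z + P%:C = 0 ->
  (B ^+ 2 <= 4 * P)%R -> cmod z = Num.sqrt P.
Proof.
case: z => x y /quad_rootE [e1 e2] discr; rewrite /cmod /=; congr Num.sqrt.
have /eqP : (y * (2 * x + B) = 0)%R by rewrite -[RHS]e2; ring.
rewrite mulf_eq0 => /orP [/eqP y0 | /eqP x_vertex]; last by nra.
rewrite y0 expr0n /= subr0 addr0 in e1 *.
have : ((2 * x + B) ^+ 2 = 0)%R by have := sqr_ge0 (2 * x + B); nra.
by move/eqP; rewrite sqrf_eq0 => /eqP; nra.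
Qed.

Lemma quad_roots_le rho B P : (0 <= rho)%R ->
  (forall z, z ^+ 2 + B%:C * z + P%:C = 0 -> (cmod z <= rho)%R) ->
  [/\ (P <= rho ^+ 2)%R, (0 <= rho ^+ 2 + B * rho + P)%R,
      (0 <= rho ^+ 2 - B * rho + P)%R & (B ^+ 2 <= 4 * rho ^+ 2)%R].
Proof.
move=> rho_ge0 roots_le; set D := (B ^+ 2 - 4 * P)%R.
have [D_ge0|D_lt0] := lerP 0 D.
  set d := Num.sqrt D; have d2 : (d ^+ 2 = D)%R by rewrite sqr_sqrtr.
  set r1 := ((- B + d) / 2)%R; set r2 := ((- B - d) / 2)%R.
  have eP : P = (r1 * r2)%R.
    have -> : (r1 * r2 = (B ^+ 2 - d ^+ 2) / 4)%R by rewrite /r1 /r2; field.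
    by rewrite d2 /D; field.
  have eB : B = (- (r1 + r2))%R by rewrite /r1 /r2; field.
  have real_root_le x : (x ^+ 2 + B * x + P = 0)%R -> (- rho <= x <= rho)%R.
    by move=> /quad_root_real /roots_le; rewrite cmod_real ler_norml.
  have /andP[? ?] : (- rho <= r1 <= rho)%R by apply: real_root_le; rewrite eB eP; ring.
  have /andP[? ?] : (- rho <= r2 <= rho)%R by apply: real_root_le; rewrite eB eP; ring.
  by rewrite eB eP; split; nra.
set d := Num.sqrt (- D).
have d2 : (d ^+ 2 = - D)%R by rewrite sqr_sqrtr // oppr_ge0 ltW.
have P_ge0 : (0 <= P)%R by have := sqr_ge0 B; rewrite /D in D_lt0; nra.
have /roots_le : ((- B / 2) +i* (d / 2)) ^+ 2 + B%:C * ((- B / 2) +i* (d / 2)) + P%:C = 0.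
  apply/quad_rootE; split; last by field.
  have -> : ((- B / 2) ^+ 2 - (d / 2) ^+ 2 + B * (- B / 2) + P = (- D - d ^+ 2) / 4)%R.
    by rewrite /D; field.
  by rewrite d2 subrr mul0r.
rewrite /cmod /=.
have -> : ((- B / 2) ^+ 2 + (d / 2) ^+ 2 = P)%R.
  have -> : ((- B / 2) ^+ 2 + (d / 2) ^+ 2 = (B ^+ 2 + d ^+ 2) / 4)%R by field.
  by rewrite d2 /D; field.
move=> sqrtP_le; have P_le : (P <= rho ^+ 2)%R.
  by rewrite -(sqr_sqrtr P_ge0) ler_pXn2r // ?nnegrE ?sqrtr_ge0.
by rewrite /D in D_lt0; split; nra.
Qed.

End ComplexQuadratic.

Section OptimalRate.
Variable R : rcfType.
Implicit Types (p q mu rho : R).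

Definition optimal_rate (lr l1 : R) : R :=
  (Num.sqrt (1 - lr) - Num.sqrt (1 - l1)) / (Num.sqrt (1 - lr) + Num.sqrt (1 - l1)).

(* Eigenvalues z of M(1 + p, 1 + q) attached to an eigenvalue mu of C C^T are
   the roots of z^2 + gd_coef p q mu * z + p * q. *)
Definition gd_coef p q mu : R := p + q - (1 + p) * (1 + q) * mu.

Lemma gd_coefC p q mu : gd_coef p q mu = gd_coef q p mu.
Proof. by rewrite /gd_coef; ring. Qed.

Lemma gd_coefE p q mu : gd_coef p q mu = (1 + p) * (1 + q) * (1 - mu) - 1 - p * q.
Proof. by rewrite /gd_coef; ring. Qed.

Lemma optimal_rate_ge0 (lr l1 : R) : lr <= l1 <= 1 -> 0 <= optimal_rate lr l1.
Proof.
move=> /andP[lrl1 l1_le1]; apply: divr_ge0; last by rewrite addr_ge0 ?sqrtr_ge0.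
by rewrite subr_ge0 ler_sqrt ?subr_ge0; lra.
Qed.

Lemma optimal_rate_le p q (lr l1 : R) rho :
  0 <= p -> 0 <= q -> lr <= l1 < 1 -> 0 <= rho -> p * q <= rho ^+ 2 ->
  0 <= rho ^+ 2 - gd_coef p q lr * rho + p * q -> gd_coef p q lr ^+ 2 <= 4 * rho ^+ 2 ->
  0 <= rho ^+ 2 + gd_coef p q l1 * rho + p * q -> gd_coef p q l1 ^+ 2 <= 4 * rho ^+ 2 ->
  optimal_rate lr l1 <= rho.
Proof.
rewrite !gd_coefE => p_ge0 q_ge0 /andP[lrl1 l1_lt1] rho_ge0 pq_le hr Br hl Bl.
set a : R := Num.sqrt (1 - lr); set b : R := Num.sqrt (1 - l1).
set u := (1 + p) * (1 + q) in hr Br hl Bl *.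
have a_gt0 : 0 < a by rewrite sqrtr_gt0 subr_gt0 (le_lt_trans lrl1).
have b_ge0 : 0 <= b by rewrite sqrtr_ge0.
have a2 : a ^+ 2 = 1 - lr by rewrite sqr_sqrtr // subr_ge0 ltW // (le_lt_trans lrl1).
have b2 : b ^+ 2 = 1 - l1 by rewrite sqr_sqrtr // subr_ge0 ltW.
have ba : b <= a by rewrite ler_sqrt ?subr_ge0; lra.
have u_ge1 : 1 <= u by rewrite /u; nra.
rewrite /optimal_rate -/a -/b ler_pdivrMr; last by lra.
have [rho_ge1|rho_lt1] := lerP 1 rho.
  have : a + b <= rho * (a + b) by rewrite ler_peMl // addr_ge0 // ltW.
  lra.
have [rho0|rho_neq0] := eqVneq rho 0.
  have coef0 x : x ^+ 2 <= 4 * rho ^+ 2 -> x = 0.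
    by rewrite rho0 expr0n mulr0 => x2; apply/eqP; rewrite -sqrf_eq0 eq_le x2 sqr_ge0.
  have : u * lr = u * l1 by have := coef0 _ Br; have := coef0 _ Bl; lra.
  move/(mulfI (lt0r_neq0 (lt_le_trans ltr01 u_ge1))) => lr_l1.
  by rewrite rho0 /a /b lr_l1; lra.
have rho_gt0 : 0 < rho by rewrite lt_def rho_neq0.
have ub : (1 - rho) ^+ 2 <= u * (1 - l1).
  rewrite -(ler_pM2l rho_gt0).
  have : 0 <= (1 - rho) * (rho ^+ 2 - p * q) by apply: mulr_ge0; lra.
  nra.
have ua : u * (1 - lr) <= (1 + rho) ^+ 2.
  rewrite -(ler_pM2l rho_gt0).
  have : 0 <= (1 + rho) * (rho ^+ 2 - p * q) by apply: mulr_ge0; lra.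
  nra.
have : (a * (1 - rho)) ^+ 2 <= (b * (1 + rho)) ^+ 2.
  by rewrite !exprMn a2 b2; nra.
by rewrite ler_pXn2r ?nnegrE ?mulr_ge0 //; lra.
Qed.

Lemma optimal_stepsizes (lr l1 : R) : 0 <= lr -> lr <= l1 < 1 ->
  exists p q, [/\ 0 <= p, p <= optimal_rate lr l1, p <= q,
    p * q = optimal_rate lr l1 ^+ 2 &
    forall mu, lr <= mu <= l1 -> gd_coef p q mu ^+ 2 <= 4 * (p * q)].
Proof.
move=> lr_ge0 /andP[lrl1 l1_lt1]; set v := optimal_rate lr l1.
have v_ge0 : 0 <= v by apply: optimal_rate_ge0; rewrite lrl1 ltW.
set a : R := Num.sqrt (1 - lr); set b : R := Num.sqrt (1 - l1).
have a_gt0 : 0 < a by rewrite sqrtr_gt0 subr_gt0 (le_lt_trans lrl1).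
have b_ge0 : 0 <= b by rewrite sqrtr_ge0.
have a2 : a ^+ 2 = 1 - lr by rewrite sqr_sqrtr // subr_ge0 ltW // (le_lt_trans lrl1).
have b2 : b ^+ 2 = 1 - l1 by rewrite sqr_sqrtr // subr_ge0 ltW.
have ba : b <= a by rewrite ler_sqrt ?subr_ge0; lra.
(* (1 + p) (1 + q) = u and p q = v^2 make gd_coef p q equal to 2 v at lr and -2 v at l1. *)
set u := 4 / (a + b) ^+ 2.
have ua : u * a ^+ 2 = (1 + v) ^+ 2 by rewrite /u /v /optimal_rate -/a -/b; field; lra.
have ub : u * b ^+ 2 = (1 - v) ^+ 2 by rewrite /u /v /optimal_rate -/a -/b; field; lra.
have u_gt0 : 0 < u by rewrite /u divr_gt0 // exprn_gt0 //; lra.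
set S := u - 1 - v ^+ 2.
have S_ge : 2 * v <= S.
  have : u * a ^+ 2 <= u by rewrite a2; nra.
  by rewrite ua /S; nra.
set d := Num.sqrt (S ^+ 2 - 4 * v ^+ 2).
have d2 : d ^+ 2 = S ^+ 2 - 4 * v ^+ 2 by rewrite sqr_sqrtr //; nra.
have d_ge0 : 0 <= d by rewrite sqrtr_ge0.
have d_le : d <= S by nra.
exists ((S - d) / 2), ((S + d) / 2).
have pq : (S - d) / 2 * ((S + d) / 2) = v ^+ 2.
  by rewrite (_ : _ * _ = (S ^+ 2 - d ^+ 2) / 4); [rewrite d2; field | field].
split => //; [lra | nra | lra |] => mu /andP[lr_mu mu_l1].
rewrite pq /gd_coef.
have -> : (1 + (S - d) / 2) * (1 + (S + d) / 2) = u by rewrite mulrDl !mulrDr pq /S; field.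
have -> : (S - d) / 2 + (S + d) / 2 - u * mu = u * (1 - mu) - 1 - v ^+ 2 by rewrite /S; field.
have : u * (1 - mu) <= (1 + v) ^+ 2 by rewrite -ua a2; nra.
have : (1 - v) ^+ 2 <= u * (1 - mu) by rewrite -ub b2; nra.
nra.
Qed.

End OptimalRate.

Lemma mx_neq0_dims (T : nmodType) m n (M : 'M[T]_(m, n)) : M != 0 -> (0 < m)%N /\ (0 < n)%N.
Proof. by case: m n M => [|m] [|n] M; rewrite ?flatmx0 ?thinmx0 ?eqxx. Qed.

Section RealToComplex.
Variable R : realType.
Local Notation toC := (real_complex R).
Local Open Scope sesquilinear_scope.
Local Open Scope complex_scope.

Lemma map_gram_trC k n (G : 'M[R]_(k, n)) :
  map_mx toC (G^T *m G) = (map_mx toC G)^T *m (map_mx toC G)^T ^t*.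
Proof.
rewrite map_mxM map_trmx; congr (_ *m _).
by apply/matrixP => i j; rewrite !mxE; apply/esym/conjc_real.
Qed.

Lemma real_gram_eigen_ge0 k n (G : 'M[R]_(k, n)) (w : 'rV_n) mu :
  w != 0 -> w *m map_mx toC (G^T *m G) = mu *: w -> 0 <= mu.
Proof. by rewrite map_gram_trC; apply: gram_eigen_ge0. Qed.

Lemma real_gram_eigen0 k n (G : 'M[R]_(k, n)) (w : 'rV_n) :
  w *m map_mx toC (G^T *m G) = 0 -> w *m (map_mx toC G)^T = 0.
Proof. by rewrite map_gram_trC; apply: gram_eigen0. Qed.

Lemma real_gram_root0_char_poly k n (G : 'M[R]_(k, n)) :
  row_free (map_mx toC G)^T -> ~~ root (char_poly (map_mx toC (G^T *m G))) 0.
Proof. by rewrite map_gram_trC; apply: gram_root0_char_poly. Qed.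

Lemma cmx_gd_iter_mx n1 n2 (X : 'M[R]_(n2, n1)) g1 g2 :
  cmx (gd_iter_mx X g1 g2) = gd_mx (map_mx toC X) g1%:C g2%:C.
Proof.
rewrite cmxE /gd_iter_mx /gd_mx map_block_mx !map_mxD !map_mxZ !map_scalar_mx.
by rewrite map_mxM map_trmx !(rmorphN, rmorphM, rmorphB, rmorph1).
Qed.

Lemma real_complex_eq0 (x : R) : (x%:C == 0 :> R[i]) = (x == 0).
Proof. exact: (inj_eq (@complexI R) x 0). Qed.

Lemma shift_eq0 (z : R[i]) (g : R) : z + g%:C - 1 = 0 -> z = (1 - g)%:C.
Proof.
rewrite rmorphB rmorph1 => h; apply/eqP; rewrite -subr_eq0 -[X in _ == X]h.
by apply/eqP; ring.
Qed.

Lemma gd_eigen_quadE (z : R[i]) (g1 g2 mu : R) :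
  (z + g1%:C - 1) * (z + g2%:C - 1) = g1%:C * g2%:C * z * mu%:C <->
  z ^+ 2 + (gd_coef (g1 - 1) (g2 - 1) mu)%:C * z + ((g1 - 1) * (g2 - 1))%:C = 0.
Proof.
have <- : (z + g1%:C - 1) * (z + g2%:C - 1) - g1%:C * g2%:C * z * mu%:C =
    z ^+ 2 + (gd_coef (g1 - 1) (g2 - 1) mu)%:C * z + ((g1 - 1) * (g2 - 1))%:C.
  by rewrite /gd_coef !(rmorphB, rmorphD, rmorphM, rmorph1); ring.
by split => [->|/eqP]; [rewrite subrr | rewrite subr_eq0 => /eqP].
Qed.

End RealToComplex.

Section TwoBlockGradientDescent.
Variable R : realType.
Local Notation toC := (real_complex R).
Local Open Scope sesquilinear_scope.
Local Open Scope complex_scope.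
Variables (m n1 n2 : nat) (A : 'M[R]_(m, n1 + n2)).
Hypothesis rkA : \rank A = (n1 + n2)%N.
Hypothesis A1_orth : (lsubmx A)^T *m lsubmx A = 1%:M.
Hypothesis A2_orth : (rsubmx A)^T *m rsubmx A = 1%:M.
Local Notation A1 := (lsubmx A).
Local Notation A2 := (rsubmx A).
Local Notation C := (A2^T *m A1).
Local Notation Cc := (map_mx toC C).
Local Notation N := (C *m C^T).

(* I - C C^T is again a Gram matrix, so the eigenvalues of C C^T lie in [0, 1]. *)
Lemma subr1_gram_C : 1%:M - N = (A2 - A1 *m C^T)^T *m (A2 - A1 *m C^T).
Proof.
have -> : C^T = A1^T *m A2 by rewrite trmx_mul trmxK.
set B := A1^T *m A2; have CB : C = B^T by rewrite /B trmx_mul trmxK.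
have -> : (A2 - A1 *m B)^T = A2^T - B^T *m A1^T by rewrite linearB /= trmx_mul.
rewrite CB mulmxBl !mulmxBr A2_orth.
have -> : A2^T *m (A1 *m B) = B^T *m B by rewrite mulmxA -CB.
have -> : B^T *m A1^T *m A2 = B^T *m B by rewrite -mulmxA.
have -> : B^T *m A1^T *m (A1 *m B) = B^T *m B.
  by rewrite -mulmxA (mulmxA A1^T) A1_orth mul1mx.
by rewrite subrr subr0.
Qed.

Lemma gram_C_eigen_lt1 (y : 'rV[R[i]]_n2) mu :
  y != 0 -> y *m map_mx toC N = mu *: y -> mu < 1.
Proof.
move=> y_neq0 Ny; set G := A2 - A1 *m C^T.
have Gy : y *m map_mx toC (G^T *m G) = (1 - mu) *: y.
  by rewrite -subr1_gram_C map_mxB map_mx1 mulmxBr mulmx1 Ny scalerBl scale1r.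
rewrite lt_def -subr_ge0 (real_gram_eigen_ge0 y_neq0 Gy) andbT.
apply: contra y_neq0 => /eqP mu1; move: Gy; rewrite mu1 subrr scale0r => /real_gram_eigen0.
rewrite /G map_mxB map_mxM linearB /= mulmxBr trmx_mul !map_trmx trmxK => /eqP.
rewrite subr_eq0 => /eqP yA2; set u := row_mx (- (y *m Cc)) y.
have A_free : row_free (map_mx toC A)^T by rewrite /row_free mxrank_tr mxrank_map rkA.
have : u *m (map_mx toC A)^T = 0 *m (map_mx toC A)^T.
  rewrite mul0mx -[A]hsubmxK map_row_mx tr_row_mx mul_row_col !map_trmx.
  by rewrite yA2 mulNmx -[X in - X]mulmxA addNr.
by move/(row_free_inj A_free)/eqP; rewrite -row_mx0 => /eqP/eq_row_mx[_ ->].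
Qed.

Lemma ceigs_gram_C mu : mu \in ceigs N ->
  [/\ mu = (complex.Re mu)%:C, 0 <= complex.Re mu & complex.Re mu < 1].
Proof.
rewrite mem_ceigs cmxE => /eigenvalueP [y Ny y_neq0].
have := gram_C_eigen_lt1 y_neq0 Ny; move: Ny; rewrite -{1}[C]trmxK.
move=> /(real_gram_eigen_ge0 y_neq0).
by case: mu => a b; rewrite lecE ltcE /= => /andP[/eqP-> ?] /andP[_ ?].
Qed.

Hypothesis rkC : \rank C = minn n1 n2.

Lemma row_free_Cc : (n2 <= n1)%N -> row_free Cc.
Proof. by move=> n21; rewrite /row_free mxrank_map rkC; apply/eqP/minn_idPr. Qed.

Lemma row_free_trCc : (n1 <= n2)%N -> row_free Cc^T.
Proof. by move=> n12; rewrite /row_free mxrank_tr mxrank_map rkC; apply/eqP/minn_idPl. Qed.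

Lemma count_ceigs_gram_C0 : count_mem 0 (ceigs N) = (n2 - minn n1 n2)%N.
Proof.
rewrite count_mem_ceigs cmxE; have [n21|n12] := leqP n2 n1.
  rewrite subnn mupNroot // -{1}[C]trmxK; apply: real_gram_root0_char_poly.
  by rewrite /row_free mxrank_tr mxrank_map mxrank_tr rkC; apply/eqP/minn_idPr.
have := mup0_char_poly_mulmxC (map_mx toC C^T) Cc; rewrite -!map_mxM.
rewrite mupNroot => [/(congr1 (subn^~ n1))|]; first rewrite addKn => e.
  by apply: etrans (esym e) _; rewrite addn0.
by apply: real_gram_root0_char_poly; rewrite row_free_trCc // ltnW.
Qed.

Local Notation ge := (fun x y : R => y <= x).
Local Notation eigs := (sort ge [seq complex.Re z | z <- ceigs N]).

Lemma sorted_eigs : sorted ge eigs.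
Proof. by apply: sort_sorted => x y; exact: le_total. Qed.

Lemma size_eigs : size eigs = n2.
Proof. by rewrite size_sort size_map size_ceigs. Qed.

Lemma mem_eigs x : x \in eigs -> x%:C \in ceigs N /\ 0 <= x < 1.
Proof.
by rewrite mem_sort => /mapP [mu mu_in ->]; have [<- -> ->] := ceigs_gram_C mu_in.
Qed.

Lemma eig_desc_gram_C k : (0 < k <= n2)%N ->
  (eig_desc k N)%:C \in ceigs N /\ 0 <= eig_desc k N < 1.
Proof.
by case: k => // k /andP[_ kn]; apply: mem_eigs; rewrite mem_nth // size_eigs.
Qed.

Lemma ceigs_gram_C_le1 mu : mu \in ceigs N -> complex.Re mu <= eig_desc 1 N.
Proof.
move=> mu_in; have x_in : complex.Re mu \in eigs by rewrite mem_sort map_f.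
rewrite -(nth_index 0 x_in); apply: sorted_ge_nth sorted_eigs _.
by rewrite index_mem x_in.
Qed.

Lemma ceigs_gram_C_rank : C != 0 ->
  0 < eig_desc (minn n1 n2) N /\
  {in ceigs N, forall mu, mu != 0 -> eig_desc (minn n1 n2) N <= complex.Re mu}.
Proof.
move=> /mx_neq0_dims [n2_gt0 n1_gt0].
have eigs_ge0 : all (fun x => 0 <= x) eigs by apply/allP => x /mem_eigs [_ /andP[]].
have rank_le : (0 < minn n1 n2 <= size eigs)%N.
  by rewrite size_eigs leq_min n1_gt0 n2_gt0 geq_minr.
have eigs0 : count (pred1 0) eigs = (size eigs - minn n1 n2)%N.
  rewrite size_eigs -count_ceigs_gram_C0 (permP (permEl (perm_sort _ _))) count_map.
  apply: eq_in_count => mu /ceigs_gram_C [mu_real _ _] /=.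
  by rewrite [in RHS]mu_real -[0 : R[i]]/((0 : R)%:C) (inj_eq (@complexI R)).
have [lr_gt0 lr_le] := sorted_ge_nth_rank sorted_eigs eigs_ge0 rank_le eigs0.
split => // mu mu_in mu_neq0; apply: lr_le; first by rewrite mem_sort map_f.
have [mu_real _ _] := ceigs_gram_C mu_in.
by apply: contra mu_neq0 => /eqP mu0; rewrite mu_real mu0.
Qed.

Lemma gd_iter_eigen_flat g1 g2 z (x : 'rV_n1) : g1 != 0 -> x != 0 ->
  row_mx x 0 *m gd_mx Cc g1%:C g2%:C = z *: row_mx x 0 -> z = (1 - g1)%:C /\ (n2 < n1)%N.
Proof.
move=> g1_neq0 x_neq0 /gd_mx_eigenE [].
rewrite !mul0mx !scaler0 addr0 => /eqP; rewrite scaler_eq0 (negPf x_neq0) orbF => /eqP z1.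
move/esym/eqP; rewrite scaler_eq0 oppr_eq0 real_complex_eq0 (negPf g1_neq0) /= => /eqP xC0.
split; first exact: shift_eq0.
rewrite ltnNge; apply: contra x_neq0 => n12.
by rewrite -(row_free_inj (row_free_trCc n12) (etrans xC0 (esym (mul0mx _ _)))).
Qed.

Lemma gd_iter_eigen_kerC g1 g2 z (x : 'rV_n1) (y : 'rV_n2) : g1 != 0 -> y != 0 ->
  y *m Cc = 0 -> (z + g1%:C - 1) * (z + g2%:C - 1) = 0 ->
  row_mx x y *m gd_mx Cc g1%:C g2%:C = z *: row_mx x y -> z = (1 - g2)%:C /\ (n1 < n2)%N.
Proof.
move=> g1_neq0 y_neq0 yC0 z12 /gd_mx_eigenE [_].
rewrite mulmxA yC0 mul0mx scaler0 addr0 => Ey.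
split; last first.
  rewrite ltnNge; apply: contra y_neq0 => n21.
  by rewrite -(row_free_inj (row_free_Cc n21) (etrans yC0 (esym (mul0mx _ _)))).
apply: shift_eq0; have [z2|z2_neq0] := eqVneq (z + g2%:C - 1) 0 => //.
have xCC0 : x *m map_mx toC (C^T *m C) = 0.
  have /eqP := congr1 (mulmx^~ Cc) Ey; rewrite -!scalemxAl yC0 scaler0 eq_sym.
  rewrite scaler_eq0 oppr_eq0 real_complex_eq0 (negPf g1_neq0) /= => /eqP xCC0.
  by rewrite map_mxM -map_trmx mulmxA.
move: Ey; rewrite (real_gram_eigen0 xCC0) scaler0 => /eqP; rewrite scaler_eq0.
by rewrite (negPf y_neq0) orbF => /eqP.
Qed.

Lemma ceigs_gd_iter_mx g1 g2 z : 0 < g1 -> 0 < g2 ->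
  z \in ceigs (gd_iter_mx C g1 g2) ->
  [\/ z = 0, z = (1 - g1)%:C /\ (n2 < n1)%N, z = (1 - g2)%:C /\ (n1 < n2)%N |
   exists2 mu, (mu%:C \in ceigs N) && (mu != 0) &
     z ^+ 2 + (gd_coef (g1 - 1) (g2 - 1) mu)%:C * z + ((g1 - 1) * (g2 - 1))%:C = 0].
Proof.
move=> g1_gt0 g2_gt0; rewrite mem_ceigs cmx_gd_iter_mx => /eigenvalueP [w].
rewrite -[w]hsubmxK; set x := lsubmx w; set y := rsubmx w => Ew w_neq0.
have g1_neq0 := lt0r_neq0 g1_gt0; have g2_neq0 := lt0r_neq0 g2_gt0.
have [y0|y_neq0] := eqVneq y 0.
  move: Ew w_neq0; rewrite y0 => Ew w_neq0; apply: Or42; apply: gd_iter_eigen_flat Ew => //.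
  by apply: contra w_neq0 => /eqP->; rewrite row_mx0.
have [->|z_neq0] := eqVneq z 0; first exact: Or41.
have g12z_neq0 : g1%:C * g2%:C * z != 0 by rewrite !mulf_neq0 ?real_complex_eq0.
set mu := (z + g1%:C - 1) * (z + g2%:C - 1) / (g1%:C * g2%:C * z).
have zmu : (z + g1%:C - 1) * (z + g2%:C - 1) = g1%:C * g2%:C * z * mu.
  by rewrite [RHS]mulrC divfK.
have Ny : y *m map_mx toC N = mu *: y.
  apply: (scalerI g12z_neq0); rewrite scalerA -zmu map_mxM -map_trmx.
  exact/esym/(gd_mx_eigen_gram Ew).
have mu_in : mu \in ceigs N by rewrite mem_ceigs cmxE; apply/eigenvalueP; exists y.
have [mu_real _ _] := ceigs_gram_C mu_in.
have [mu0|mu_neq0] := eqVneq mu 0.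
  apply: Or43; apply: gd_iter_eigen_kerC Ew => //; last by rewrite zmu mu0 mulr0.
  move: Ny; rewrite mu0 scale0r -{1}[C]trmxK => /real_gram_eigen0.
  by rewrite -map_trmx trmxK.
apply: Or44; exists (complex.Re mu).
  by rewrite -mu_real mu_in -real_complex_eq0 -mu_real.
by apply/gd_eigen_quadE; rewrite -mu_real.
Qed.

Lemma quad_root_le_spectral_radius g1 g2 s z : 0 < g1 -> 0 < g2 -> 0 < s ->
  s%:C \in ceigs N ->
  z ^+ 2 + (gd_coef (g1 - 1) (g2 - 1) s)%:C * z + ((g1 - 1) * (g2 - 1))%:C = 0 ->
  cmod z <= spectral_radius (gd_iter_mx C g1 g2).
Proof.
move=> g1_gt0 g2_gt0 s_gt0 s_in /gd_eigen_quadE zs.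
have [z1|z1_neq0] := eqVneq (z + g1%:C - 1) 0.
  move: zs; rewrite z1 mul0r => /esym/eqP; rewrite !mulf_eq0 !real_complex_eq0.
  rewrite (gt_eqF g1_gt0) (gt_eqF g2_gt0) (gt_eqF s_gt0) orbF /= => /eqP->.
  by rewrite cmod0 spectral_radius_ge0.
apply: cmod_le_spectral_radius; rewrite mem_ceigs cmx_gd_iter_mx.
move: s_in; rewrite mem_ceigs cmxE map_mxM -map_trmx => /eigenvalueP [y Ny y_neq0].
exact: gd_mx_eigenvalue y_neq0 Ny z1_neq0 zs.
Qed.

Lemma eig_desc_gram_C_range : C != 0 ->
  let lr := eig_desc (minn n1 n2) N in let l1 := eig_desc 1 N in
  [/\ 0 < lr, lr <= l1, l1 < 1, lr%:C \in ceigs N & l1%:C \in ceigs N].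
Proof.
move=> C_neq0 lr l1; have [n2_gt0 n1_gt0] := mx_neq0_dims C_neq0.
have [lr_gt0 _] := ceigs_gram_C_rank C_neq0.
have lr_in : lr%:C \in ceigs N.
  by apply: (proj1 (eig_desc_gram_C _)); rewrite leq_min n1_gt0 n2_gt0 geq_minr.
have [l1_in /andP[_ l1_lt1]] := @eig_desc_gram_C 1 n2_gt0.
by split=> //; apply: ceigs_gram_C_le1 lr_in.
Qed.

Lemma optimal_rate_le_spectral_radius g1 g2 : C != 0 -> 1 <= g1 -> 1 <= g2 ->
  optimal_rate (eig_desc (minn n1 n2) N) (eig_desc 1 N) <= spectral_radius (gd_iter_mx C g1 g2).
Proof.
move=> C_neq0 g1_ge1 g2_ge1.
have [lr_gt0 lr_le l1_lt1 lr_in l1_in] := eig_desc_gram_C_range C_neq0.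
have g1_gt0 := lt_le_trans ltr01 g1_ge1; have g2_gt0 := lt_le_trans ltr01 g2_ge1.
set p := g1 - 1; set q := g2 - 1.
set rho := spectral_radius _; have rho_ge0 : 0 <= rho by apply: spectral_radius_ge0.
have bounds s : 0 < s -> s%:C \in ceigs N ->
  [/\ p * q <= rho ^+ 2, 0 <= rho ^+ 2 + gd_coef p q s * rho + p * q,
      0 <= rho ^+ 2 - gd_coef p q s * rho + p * q & gd_coef p q s ^+ 2 <= 4 * rho ^+ 2].
  move=> s_gt0 s_in; apply: quad_roots_le rho_ge0 _ => z.
  exact: quad_root_le_spectral_radius.
have [pq_le _ hr Br] := bounds _ lr_gt0 lr_in.
have [_ hl _ Bl] := bounds _ (lt_le_trans lr_gt0 lr_le) l1_in.
by apply: optimal_rate_le hr Br hl Bl; rewrite ?subr_ge0 ?lr_le.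
Qed.

Lemma spectral_radius_le_optimal_rate p q : C != 0 -> 0 <= p -> 0 <= q ->
  let v := optimal_rate (eig_desc (minn n1 n2) N) (eig_desc 1 N) in
  p * q = v ^+ 2 -> ((n2 < n1)%N -> p <= v) -> ((n1 < n2)%N -> q <= v) ->
  (forall mu, eig_desc (minn n1 n2) N <= mu <= eig_desc 1 N ->
     gd_coef p q mu ^+ 2 <= 4 * (p * q)) ->
  spectral_radius (gd_iter_mx C (1 + p) (1 + q)) <= v.
Proof.
move=> C_neq0 p_ge0 q_ge0 v pq p_le q_le discr_le.
have [lr_gt0 lr_le l1_lt1 _ _] := eig_desc_gram_C_range C_neq0.
have v_ge0 : 0 <= v by apply: optimal_rate_ge0; rewrite lr_le ltW.
have addK1 (x : R) : 1 + x - 1 = x by rewrite addrAC subrr add0r.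
have add1_gt0 (x : R) : 0 <= x -> 0 < 1 + x by move=> ?; lra.
apply: spectral_radius_le => // z.
move=> /(ceigs_gd_iter_mx (add1_gt0 _ p_ge0) (add1_gt0 _ q_ge0)).
rewrite !opprD !addrA subrr !add0r !addK1.
case=> [->|[-> /p_le]|[-> /q_le]|[mu /andP[mu_in mu_neq0]]];
  rewrite ?cmod_real ?normrN ?ger0_norm //.
have [_ lr_le_mu] := ceigs_gram_C_rank C_neq0.
move=> /cmod_quad_root -> ; first by rewrite pq sqrtr_sqr ger0_norm.
rewrite discr_le // (ceigs_gram_C_le1 mu_in) andbT.
by apply: lr_le_mu mu_in _; rewrite real_complex_eq0.
Qed.

Lemma optimal_rate_attained : C != 0 ->
  exists g1 g2 : R, [/\ 1 <= g1, 1 <= g2 &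
    spectral_radius (gd_iter_mx C g1 g2) = optimal_rate (eig_desc (minn n1 n2) N) (eig_desc 1 N)].
Proof.
move=> C_neq0; have [lr_gt0 lr_le l1_lt1 _ _] := eig_desc_gram_C_range C_neq0.
have := optimal_stepsizes (l1 := eig_desc 1 N) (ltW lr_gt0); rewrite lr_le l1_lt1.
move=> /(_ isT) [p [q [p_ge0 p_le pq_le pq discr_le]]].
have q_ge0 := le_trans p_ge0 pq_le.
have add1_ge1 (x : R) : 0 <= x -> 1 <= 1 + x by move=> ?; lra.
have [n21|n12] := boolP (n2 < n1)%N.
  exists (1 + p), (1 + q); split; rewrite ?add1_ge1 //.
  apply/le_anti; rewrite (optimal_rate_le_spectral_radius C_neq0) ?add1_ge1 // andbT.
  by apply: spectral_radius_le_optimal_rate => // n12; exfalso; lia.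
exists (1 + q), (1 + p); split; rewrite ?add1_ge1 //.
apply/le_anti; rewrite (optimal_rate_le_spectral_radius C_neq0) ?add1_ge1 // andbT.
apply: spectral_radius_le_optimal_rate => //; first by rewrite mulrC.
  by move=> n21; exfalso; lia.
by move=> mu /discr_le; rewrite [gd_coef p q _]gd_coefC (mulrC p).
Qed.

End TwoBlockGradientDescent.

Unset Implicit Arguments. Set Strict Implicit.

Theorem mainTheorem14 (R : realType) (m n1 n2 : nat) (A : 'M[R]_(m, n1 + n2)) :
  \rank A = (n1 + n2)%N ->
  (lsubmx A)^T *m lsubmx A = 1%:M ->
  (rsubmx A)^T *m rsubmx A = 1%:M ->
  let C := (rsubmx A)^T *m lsubmx A in
  C != 0 ->
  \rank C = minn n1 n2 ->
  let r := minn n1 n2 in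
  let v := (Num.sqrt (1 - eig_desc r (C *m C^T)) - Num.sqrt (1 - eig_desc 1 (C *m C^T))) /
           (Num.sqrt (1 - eig_desc r (C *m C^T)) + Num.sqrt (1 - eig_desc 1 (C *m C^T))) in
  (forall g1 g2 : R, 1 <= g1 -> 1 <= g2 -> v <= spectral_radius (gd_iter_mx C g1 g2)) /\
  (exists g1 g2 : R, 1 <= g1 /\ 1 <= g2 /\ spectral_radius (gd_iter_mx C g1 g2) = v).
Proof.
move=> rkA A1_orth A2_orth C C_neq0 rkC r v; split.
  by move=> g1 g2; apply: optimal_rate_le_spectral_radius.
have [g1 [g2 [g1_ge1 g2_ge1 rho_eq]]] := optimal_rate_attained rkA A1_orth A2_orth rkC C_neq0.
by exists g1, g2.
Qed.
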